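(* Let $\mathcal{G}$ be the Lie group of $3\times 3$ pairwise comparisons matrices, $$\mathcal{G}=\left\{\begin{pmatrix} 1 & m_{12} & m_{13} \\ \frac{1}{m_{12}} & 1 & m_{23} \\ \frac{1}{m_{13}} & \frac{1}{m_{23}} & 1\end{pmatrix} : m_{12},m_{13},m_{23}\in\mathbb{R}^+\right\},$$ with the Hadamard (entrywise) product. Let $$H=\left\{\begin{pmatrix} 1 & k & \frac1k \\ \frac1k & 1 & k \\ k & \frac1k & 1\end{pmatrix} : k\in\mathbb{R}^+\right\},\qquad L=\left\{\begin{pmatrix} 1 & y & yz \\ \frac1y & 1 & z \\ \frac{1}{yz} & \frac1z & 1\end{pmatrix} : y,z\in\mathbb{R}^+\right\}.$$ Then: (i) $H$ and $L$ are normal subgroups of the Lie group $\mathcal{G}$; (ii) $\mathcal{G}$ is the internal direct product of the normal Lie subgroups $H$ and $L$; in particular $\mathcal{G}\simeq H\times L$.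
   Context: The Hadamard product is $M\cdot N=[m_{ij}n_{ij}]$, with identity the all-ones matrix $e$. A group $\mathcal{G}$ is the internal direct product of normal subgroups $N_1,\dots,N_n$ if $\mathcal{G}=N_1N_2\cdots N_n$ and $N_i\cap(N_1\cdots N_{i-1}N_{i+1}\cdots N_n)=\{e\}$ for every $i$. *)

From HB Require Import structures.
From mathcomp Require Import all_boot all_order all_algebra.
From mathcomp Require Import reals.
Set Implicit Arguments. Unset Strict Implicit. Unset Printing Implicit Defensive.
Import Order.TTheory GRing.Theory Num.Theory.
Local Open Scope ring_scope.

Section PC.
Variable R : realType.

Definition pcmat (a b c : R) : 'M[R]_3 := \matrix_(i < 3, j < 3)
  match nat_of_ord i, nat_of_ord j with
  | 0%N, 1%N => a | 0%N, 2%N => b | 1%N, 0%N => a^-1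
  | 1%N, 2%N => c | 2%N, 0%N => b^-1 | 2%N, 1%N => c^-1
  | _, _ => 1 end.

Definition hadamard (M N : 'M[R]_3) : 'M[R]_3 := \matrix_(i, j) (M i j * N i j).
Definition hone : 'M[R]_3 := const_mx 1.
Definition hinv (M : 'M[R]_3) : 'M[R]_3 := map_mx (fun x => x^-1) M.

Definition inG (M : 'M[R]_3) : Prop :=
  exists a b c : R, [/\ 0 < a, 0 < b, 0 < c & M = pcmat a b c].

Definition Hmat (k : R) : 'M[R]_3 := pcmat k k^-1 k.
Definition inH (M : 'M[R]_3) : Prop := exists k : R, 0 < k /\ M = Hmat k.

Definition Lmat (y z : R) : 'M[R]_3 := pcmat y (y * z) z.
Definition inL (M : 'M[R]_3) : Prop :=
  exists y z : R, [/\ 0 < y, 0 < z & M = Lmat y z].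

Definition is_subgroup (S : 'M[R]_3 -> Prop) : Prop :=
  [/\ forall M, S M -> inG M,
      S hone,
      forall M N, S M -> S N -> S (hadamard M N)
    & forall M, S M -> S (hinv M)].

Definition is_normal (S : 'M[R]_3 -> Prop) : Prop :=
  is_subgroup S /\
  forall g n, inG g -> S n -> S (hadamard (hadamard g n) (hinv g)).

Definition internal_direct_product2 (N1 N2 : 'M[R]_3 -> Prop) : Prop :=
  [/\ forall g, inG g <-> exists n1 n2, [/\ N1 n1, N2 n2 & g = hadamard n1 n2],
      forall M, N1 M /\ N2 M <-> M = hone
    & forall M, N2 M /\ N1 M <-> M = hone].

End PC.

(* Through [pcmat], G is the group of positive triples (m12, m13, m23) under
   coordinatewise multiplication; it is abelian, so every subgroup is normal.
   The consistency ratio m12 m23 / m13 is a character of G whose kernel is L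
   and which maps [Hmat k] to k^3.  As cubing is a bijection of the positive
   reals, H meets L trivially, and every g factors as [Hmat k] times an element
   of L, where k is the cube root of the consistency ratio of g. *)
From mathcomp Require Import all_boot all_order all_algebra.
From mathcomp Require Import reals.
From mathcomp Require Import ring.
Set Implicit Arguments. Unset Strict Implicit. Unset Printing Implicit Defensive.
Import Order.TTheory GRing.Theory Num.Theory.
Local Open Scope ring_scope.

Lemma exists_pos_root (R : rcfType) (n : nat) (t : R) :
  (0 < n)%N -> 0 < t -> exists2 k, 0 < k & k ^+ n = t.
Proof.
move=> n_gt0 t_gt0.
have le0t1 : 0 <= 1 + t by rewrite addr_ge0 ?ltW.
have t_lt_t1n : t < (1 + t) ^+ n.
  apply: (@lt_le_trans _ _ (1 + t)); first by rewrite ltrDr.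
  by rewrite -[leLHS]expr1 ler_eXn2l // ltrDl.
have sign_change : ('X^n - t%:P).[0] <= 0 <= ('X^n - t%:P).[1 + t].
  by rewrite !hornerE expr0n gtn_eqF //= sub0r oppr_le0 ltW // subr_ge0 ltW.
have [k /andP[k_ge0 _]] := poly_ivt le0t1 sign_change.
rewrite /root !hornerE subr_eq0 => /eqP kn_t.
exists k => //; rewrite lt_def k_ge0 andbT.
by apply: contraTneq t_gt0 => k0; rewrite -kn_t k0 expr0n gtn_eqF // ltxx.
Qed.

Section PairwiseComparisons.
Variable R : realType.
Implicit Types (a b c k y z : R) (M N g h l : 'M[R]_3).

Lemma hadamard_pcmat a b c a' b' c' :
  hadamard (pcmat a b c) (pcmat a' b' c') = pcmat (a * a') (b * b') (c * c').
Proof.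
apply/matrixP => i j; rewrite !mxE.
by case: i => [[|[|[|i]]] ?]; case: j => [[|[|[|j]]] ?] //=; rewrite ?mulr1 ?invfM.
Qed.

Lemma hinv_pcmat a b c : hinv (pcmat a b c) = pcmat a^-1 b^-1 c^-1.
Proof.
apply/matrixP => i j; rewrite !mxE.
by case: i => [[|[|[|i]]] ?]; case: j => [[|[|[|j]]] ?] //=; rewrite ?invr1.
Qed.

Lemma hone_pcmat : hone R = pcmat 1 1 1.
Proof.
apply/matrixP => i j; rewrite !mxE.
by case: i => [[|[|[|i]]] ?]; case: j => [[|[|[|j]]] ?] //=; rewrite ?invr1.
Qed.

Lemma hadamardC M N : hadamard M N = hadamard N M.
Proof. by apply/matrixP => i j; rewrite !mxE mulrC. Qed.

Lemma hadamardACA M N M' N' :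
  hadamard (hadamard M N) (hadamard M' N') = hadamard (hadamard M M') (hadamard N N').
Proof. by apply/matrixP => i j; rewrite !mxE mulrACA. Qed.

Lemma inG_gt0 g i j : inG g -> 0 < g i j.
Proof.
move=> [a [b [c [a0 b0 c0 ->]]]]; rewrite mxE.
by case: i => [[|[|[|i]]] ?]; case: j => [[|[|[|j]]] ?] //=; rewrite ?invr_gt0.
Qed.

Lemma hadamardK g : inG g -> cancel (hadamard g) (hadamard (hinv g)).
Proof. by move=> Gg M; apply/matrixP => i j; rewrite !mxE mulKf ?lt0r_neq0 ?inG_gt0. Qed.

Lemma hadamardVK g : inG g -> cancel (hadamard (hinv g)) (hadamard g).
Proof. by move=> Gg M; apply/matrixP => i j; rewrite !mxE mulVKf ?lt0r_neq0 ?inG_gt0. Qed.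

Lemma inG_subgroup : is_subgroup (@inG R).
Proof.
split=> //.
- by exists 1, 1, 1; rewrite hone_pcmat.
- move=> _ _ [a [b [c [a0 b0 c0 ->]]]] [a' [b' [c' [a0' b0' c0' ->]]]].
  by exists (a * a'), (b * b'), (c * c'); rewrite hadamard_pcmat !mulr_gt0.
- move=> _ [a [b [c [a0 b0 c0 ->]]]].
  by exists a^-1, b^-1, c^-1; rewrite hinv_pcmat !invr_gt0.
Qed.

Lemma subgroup_normal (S : 'M[R]_3 -> Prop) : is_subgroup S -> is_normal S.
Proof.
by move=> subS; split=> // g n Gg Sn; rewrite hadamardC hadamardK.
Qed.

Definition consistency_ratio M : R := M 0 1 * M 1 2 / M 0 2.

Lemma consistency_ratioM M N :
  consistency_ratio (hadamard M N) = consistency_ratio M * consistency_ratio N.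
Proof. by rewrite /consistency_ratio !mxE invfM; ring. Qed.

Lemma consistency_ratioV M : consistency_ratio (hinv M) = (consistency_ratio M)^-1.
Proof. by rewrite /consistency_ratio !mxE !invfM invrK. Qed.

Lemma consistency_ratio_pcmat a b c : consistency_ratio (pcmat a b c) = a * c / b.
Proof. by rewrite /consistency_ratio !mxE. Qed.

Lemma consistency_ratio_Hmat k : consistency_ratio (Hmat k) = k ^+ 3.
Proof. by rewrite consistency_ratio_pcmat invrK -expr2 -exprSr. Qed.

Lemma consistency_ratio_gt0 g : inG g -> 0 < consistency_ratio g.
Proof. by move=> Gg; rewrite divr_gt0 ?mulr_gt0 ?inG_gt0. Qed.

Lemma inLE M : inL M <-> inG M /\ consistency_ratio M = 1.
Proof.
split=> [[y [z [y0 z0 ->]]] | [[a [b [c [a0 b0 c0 ->]]]]]].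
  split; first by exists y, (y * z), z; rewrite mulr_gt0.
  by rewrite consistency_ratio_pcmat divff // lt0r_neq0 ?mulr_gt0.
rewrite consistency_ratio_pcmat => /divr1_eq ac_b.
by exists a, c; rewrite /Lmat ac_b.
Qed.

Lemma inH_subgroup : is_subgroup (@inH R).
Proof.
split.
- by move=> _ [k [k0 ->]]; exists k, k^-1, k; rewrite invr_gt0.
- by exists 1; rewrite hone_pcmat /Hmat invr1.
- move=> _ _ [k [k0 ->]] [k' [k0' ->]].
  by exists (k * k'); rewrite mulr_gt0 // /Hmat hadamard_pcmat invfM.
- by move=> _ [k [k0 ->]]; exists k^-1; rewrite invr_gt0 /Hmat hinv_pcmat.
Qed.

Lemma inL_subgroup : is_subgroup (@inL R).
Proof.
have [_ G1 G_mul G_inv] := inG_subgroup.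
split.
- by move=> M /inLE[].
- apply/inLE; split=> //.
  by rewrite hone_pcmat consistency_ratio_pcmat invr1 !mulr1.
- move=> M N /inLE[GM rM] /inLE[GN rN].
  by apply/inLE; rewrite consistency_ratioM rM rN mulr1; split; first exact: G_mul.
- move=> M /inLE[GM rM].
  by apply/inLE; rewrite consistency_ratioV rM invr1; split; first exact: G_inv.
Qed.

Lemma inH_inL_hone M : inH M /\ inL M <-> M = hone R.
Proof.
split=> [[[k [k0 ->]] /inLE[_]] | ->].
  rewrite consistency_ratio_Hmat => /eqP; rewrite pexpr_eq1 ?ltW // => /eqP ->.
  by rewrite hone_pcmat /Hmat invr1.
by case: inH_subgroup; case: inL_subgroup.
Qed.

Lemma inG_HL_decomposition g :
  inG g -> exists h l, [/\ inH h, inL l & g = hadamard h l].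
Proof.
move=> Gg; have [_ _ G_mul G_inv] := inG_subgroup; have [HG _ _ _] := inH_subgroup.
have [k k_gt0 k3] := exists_pos_root (n := 3) isT (consistency_ratio_gt0 Gg).
have Hh : inH (Hmat k) by exists k.
exists (Hmat k), (hadamard (hinv (Hmat k)) g); split=> //; last by rewrite (hadamardVK (HG _ Hh)).
apply/inLE; split; first by apply: G_mul => //; apply/G_inv/HG.
rewrite consistency_ratioM consistency_ratioV consistency_ratio_Hmat k3.
by rewrite mulVf // lt0r_neq0 ?consistency_ratio_gt0.
Qed.

Lemma HL_decomposition_uniq h1 l1 h2 l2 :
  inH h1 -> inL l1 -> inH h2 -> inL l2 ->
  hadamard h1 l1 = hadamard h2 l2 -> h1 = h2 /\ l1 = l2.
Proof.
move=> [k1 [k1_gt0 ->]] /inLE[_ r1] [k2 [k2_gt0 ->]] /inLE[_ r2] eq12.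
have k12 : k1 = k2.
  apply/eqP; rewrite -(@eqrXn2 _ 3) ?ltW //; apply/eqP.
  move/(congr1 consistency_ratio): eq12.
  by rewrite !consistency_ratioM r1 r2 !mulr1 !consistency_ratio_Hmat.
subst k2; split=> //.
have [GH _ _ _] := inH_subgroup.
by apply: (can_inj (hadamardK (GH _ _))) eq12; exists k1.
Qed.

End PairwiseComparisons.

Theorem mainTheorem6 (R : realType) :
  (* (i) H and L are normal subgroups of G *)
  (is_normal (@inH R) /\ is_normal (@inL R)) /\
  (* (ii) G is the internal direct product of H and L ... *)
  (internal_direct_product2 (@inH R) (@inL R) /\
  (* ... in particular G ≃ H × L via (h, l) |-> h · l, a bijective homomorphism *)
   (forall h1 l1 h2 l2 : 'M[R]_3, inH h1 -> inL l1 -> inH h2 -> inL l2 ->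
       hadamard (hadamard h1 l1) (hadamard h2 l2)
       = hadamard (hadamard h1 h2) (hadamard l1 l2)) /\
   (forall h1 l1 h2 l2 : 'M[R]_3, inH h1 -> inL l1 -> inH h2 -> inL l2 ->
       hadamard h1 l1 = hadamard h2 l2 -> h1 = h2 /\ l1 = l2) /\
   (forall g : 'M[R]_3, inG g -> exists h l, [/\ inH h, inL l & g = hadamard h l])).
Proof.
have [HG _ _ _] := @inH_subgroup R; have [LG _ _ _] := @inL_subgroup R.
have [_ _ G_mul _] := @inG_subgroup R.
split; first by split; apply: subgroup_normal; [exact: inH_subgroup | exact: inL_subgroup].
split; last split; last split.
- split=> [g | M | M]; last by rewrite -inH_inL_hone and_comm.
  + split=> [|[h [l [Hh Ll ->]]]]; first exact: inG_HL_decomposition.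
    by apply: G_mul; [apply: HG | apply: LG].
  + exact: inH_inL_hone.
- by move=> *; exact: hadamardACA.
- exact: HL_decomposition_uniq.
- exact: inG_HL_decomposition.
Qed.
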